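(* Consider an instance $(f,V,B)$ and run the main loop of Algorithm $\mathsf{LA}$ (described in the context). Let $X$ and $Y$ be the two sets at the end of the main loop, and let $O_1$ be an optimal solution of the problem restricted to $V_1$, i.e. $O_1\in\arg\max\{f(S): S\subseteq V_1,\ c(S)\le B\}$. Then $$f(O_1)\le 3\big(f(X)+f(Y)\big).$$
   Context: Setting: $V$ is a finite ground set of size $n$. $f:2^V\to\mathbb{R}_{\ge 0}$ is a non-negative submodular set function with $f(\emptyset)=0$. Submodular means $f(A\cup\{e\})-f(A)\ge f(B'\cup\{e\})-f(B')$ for all $A\subseteq B'\subseteq V$ and $e\in V\setminus B'$. Each $e\in V$ has a cost $c(e)>0$, and $c(S)=\sum_{e\in S}c(e)$. $B>0$ is a budget, and $c(e)\le B$ for every $e\in V$. The notation $f(e\mid S)=f(S\cup\{e\})-f(S)$ is used throughout. Algorithm $\mathsf{LA}$ on $(f,V,B)$ runs as follows. 1. Set $V_1=\{e\in V: c(e)\le B/2\}$ and $X=Y=\emptyset$. Let $e_{\max}\in\arg\max_{e\in V}f(e)$. 2. Main loop: process each $e\in V_1$ once, in an arbitrary fixed order. Among the sets $Z\in\{X,Y\}$ satisfying $f(e\mid Z)/c(e)\ge f(Z)/B$, choose one maximizing $f(e\mid Z)/c(e)$, breaking ties arbitrarily. If such a $Z$ exists, add $e$ to $Z$. 3. After the loop, for $T\in\{X,Y\}$ let $T(j)$ denote the set of the last $j$ elements added to $T$. Let $X'$ be the set $X(j)$ of largest cost among those with $0\le j\le|X|$ and $c(X(j))\le B$. Define $Y'$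 from $Y$ in the same way. 4. Return the set $S$ among $X'$, $Y'$ and $\{e_{\max}\}$ with the largest $f$ value. *)

From mathcomp Require Import all_boot all_order all_algebra.
Set Implicit Arguments. Unset Strict Implicit. Unset Printing Implicit Defensive.
Import Order.TTheory GRing.Theory Num.Theory.
Local Open Scope ring_scope.

Section LA.
Variables (R : realFieldType) (V : finType).

Definition submodular (f : {set V} -> R) : Prop :=
  forall (A B' : {set V}) (e : V), A \subset B' -> e \notin B' ->
    f (e |: A) - f A >= f (e |: B') - f B'.

Definition marg (f : {set V} -> R) (e : V) (S : {set V}) : R := f (e |: S) - f S.

Definition cost (c : V -> R) (S : {set V}) : R := \sum_(e in S) c e.

Definition V1 (c : V -> R) (B : R) : {set V} := [set e | c e <= B / 2].

Definition eligible (f : {set V} -> R) (c : V -> R) (B : R) (e : V) (Z : {set V}) : bool :=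
  marg f e Z / c e >= f Z / B.

(* One iteration of the main loop of LA on element e: the allowed transitions
   from (X, Y) (nondeterminism = arbitrary tie-breaking). *)
Definition LA_step (f : {set V} -> R) (c : V -> R) (B : R)
  (st : {set V} * {set V}) (e : V) (st' : {set V} * {set V}) : Prop :=
  let: (X, Y) := st in
  [/\ ~~ eligible f c B e X, ~~ eligible f c B e Y & st' = (X, Y)]
  \/ [/\ eligible f c B e X,
         (eligible f c B e Y -> marg f e Y / c e <= marg f e X / c e)
       & st' = (e |: X, Y)]
  \/ [/\ eligible f c B e Y,
         (eligible f c B e X -> marg f e X / c e <= marg f e Y / c e)
       & st' = (X, e |: Y)].

Inductive LA_loop (f : {set V} -> R) (c : V -> R) (B : R) :
  {set V} * {set V} -> seq V -> {set V} * {set V} -> Prop :=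
| LA_loop_nil st : LA_loop f c B st [::] st
| LA_loop_cons st e s st' st'' :
    LA_step f c B st e st' -> LA_loop f c B st' s st'' -> LA_loop f c B st (e :: s) st''.

End LA.

From mathcomp Require Import all_boot all_order all_algebra.
From mathcomp Require Import lra.
Set Implicit Arguments. Unset Strict Implicit. Unset Printing Implicit Defensive.
Import Order.TTheory GRing.Theory Num.Theory.
Local Open Scope ring_scope.

(* Bound f(O1) <= 3 (f(X) + f(Y)) for the two sets built by the main loop of LA.
   Only feasibility of O1 (O1 in V1, c(O1) <= B) is used, not its optimality.

   Charging argument.  When an element o of O processed by the loop does not
   end up in X, then at that step either X was not eligible for o, so
   B f(o | X) <= c(o) f(X), or o went to Y with a marginal gain at least its
   gain on X, which is then paid by the increase of f(Y).  Summing over O (by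
   submodularity the gains only shrink as X grows) gives
     B sum_{o in O \ X} f(o | X) <= c(O) f(X) + B f(Y) <= B (f(X) + f(Y)),
   hence f(O u X) <= 2 f(X) + f(Y), and symmetrically for Y.  As X and Y are
   disjoint, submodularity and nonnegativity give f(O) <= f(O u X) + f(O u Y). *)

Lemma set_grow_ind (T : finType) (P : {set T} -> Prop) :
  P set0 -> (forall (x : T) (A : {set T}), x \notin A -> P A -> P (x |: A)) -> forall A, P A.
Proof.
move=> P0 Padd A; have [n] := ubnP #|A|; elim: n A => // n IH A.
case: (set_0Vmem A) => [-> //|[x xA]] cardA.
rewrite -(setD1K xA); apply: Padd; first by rewrite !inE eqxx.
by apply: IH; rewrite (cardsD1 x A) xA add1n ltnS in cardA.
Qed.

Lemma setU_setD (T : finType) (A B : {set T}) : A :|: (B :\: A) = A :|: B.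
Proof. by apply/setP => x; rewrite !inE; case: (x \in A). Qed.

Lemma big_seq_in (R : realFieldType) (T : finType) (s : seq T) (A : {set T})
  (F : T -> R) : uniq s -> {subset A <= s} ->
  \sum_(x <- s | x \in A) F x = \sum_(x in A) F x.
Proof.
move=> s_uniq sAs; rewrite big_mkcond big_uniq // -big_mkcondr /=.
by apply: eq_bigl => x; case xA: (x \in A); rewrite ?andbF ?andbT ?sAs.
Qed.

Lemma disjoint_setU1 (T : finType) (pT : predType T) (x : T) (A : {set T}) (B : pT) :
  [disjoint x |: A & B] = (x \notin B) && [disjoint A & B].
Proof. by rewrite -disjointU1; apply: eq_disjoint => y; rewrite !inE. Qed.

Lemma disjoint_setU1r (T : finType) (x : T) (A B : {set T}) :
  [disjoint A & x |: B] = (x \notin A) && [disjoint A & B].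
Proof. by rewrite disjoint_sym disjoint_setU1 disjoint_sym. Qed.

Section Submodularity.
Variables (R : realFieldType) (V : finType) (f : {set V} -> R).
Hypothesis f_sub : submodular f.

Lemma submod_setU_antitone (A B' T : {set V}) :
  A \subset B' -> [disjoint T & B'] -> f (B' :|: T) - f B' <= f (A :|: T) - f A.
Proof.
move=> sAB; elim/set_grow_ind: T => [_|x T xT IH]; first by rewrite !setU0 !subrr.
move=> disxTB; have disTB := disjointWl (subsetU1 x T) disxTB.
have xBT : x \notin B' :|: T.
  by rewrite !inE negb_or xT (disjointFr disxTB) // !inE eqxx.
have := f_sub (setSU T sAB) xBT; rewrite !(setUCA _ [set x]).
by have := IH disTB; lra.
Qed.

Lemma submod_setU_le_sum (A T : {set V}) :
  f (A :|: T) <= f A + \sum_(x in T) marg f x A.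
Proof.
elim/set_grow_ind: T => [|x T xT IH]; first by rewrite setU0 big_set0 addr0.
rewrite big_setU1 //= setUCA.
case: (boolP (x \in A)) => xA.
  have xAT : x \in A :|: T by rewrite inE xA.
  rewrite /marg; have -> : x |: A = A by apply/setUidPr; rewrite sub1set.
  have -> : x |: (A :|: T) = A :|: T by apply/setUidPr; rewrite sub1set.
  by rewrite subrr add0r.
have xAT : x \notin A :|: T by rewrite !inE negb_or xA.
by have := f_sub (subsetUl A T) xAT; rewrite /marg; lra.
Qed.

Lemma submod_le_setU_pair (f_ge0 : forall S, 0 <= f S) (O X Y : {set V}) :
  [disjoint X & Y] -> f O <= f (O :|: X) + f (O :|: Y).
Proof.
move=> disXY.
have disXOY : [disjoint X :\: O & O :|: Y].
  rewrite -setI_eq0; apply/eqP/setP => x; rewrite !inE.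
  by case: (x \in O); rewrite ?andbF //= andbC; case xY: (x \in Y);
    rewrite ?(disjointFl disXY xY).
have := submod_setU_antitone (subsetUl O Y) disXOY.
by rewrite setU_setD; have := f_ge0 (O :|: Y :|: (X :\: O)); lra.
Qed.

End Submodularity.

Section Loop.
Variables (R : realFieldType) (V : finType) (f : {set V} -> R) (c : V -> R) (B : R).
Hypotheses (f_ge0 : forall S, 0 <= f S) (f_sub : submodular f)
  (c_gt0 : forall e, 0 < c e) (B_gt0 : 0 < B).

Lemma LA_step_swap X0 Y0 e X1 Y1 :
  LA_step f c B (X0, Y0) e (X1, Y1) -> LA_step f c B (Y0, X0) e (Y1, X1).
Proof.
by case=> [[? ? [-> ->]]|[[? ? [-> ->]]|[? ? [-> ->]]]]; [left|right; right|right; left].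
Qed.

Lemma LA_loop_swap st s st' :
  LA_loop f c B st s st' -> LA_loop f c B (st.2, st.1) s (st'.2, st'.1).
Proof.
elim=> [st0|[X0 Y0] e s0 [X1 Y1] st2 step _ IH]; first exact: LA_loop_nil.
exact: LA_loop_cons (LA_step_swap step) IH.
Qed.

Lemma eligibleE e Z : eligible f c B e Z = (f Z * c e <= marg f e Z * B).
Proof. by rewrite /eligible ler_pdivlMr // mulrAC ler_pdivrMr. Qed.

Lemma eligible_marg_ge0 e Z : eligible f c B e Z -> 0 <= marg f e Z.
Proof.
rewrite eligibleE => elig; rewrite -(pmulr_lge0 _ B_gt0).
exact: le_trans (mulr_ge0 (f_ge0 Z) (ltW (c_gt0 e))) elig.
Qed.

Lemma LA_step_grows X0 Y0 e X1 Y1 : LA_step f c B (X0, Y0) e (X1, Y1) ->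
  [/\ X0 \subset X1, Y0 \subset Y1, f X0 <= f X1 & f Y0 <= f Y1].
Proof.
case=> [[_ _ [-> ->]]|[[elig _ [-> ->]]|[elig _ [-> ->]]]]; rewrite ?subxx ?lexx //;
  have := eligible_marg_ge0 elig; rewrite /marg subsetUr => gain; split=> //; lra.
Qed.

Lemma LA_loop_grows st s st' : LA_loop f c B st s st' ->
  [/\ st.1 \subset st'.1, st.2 \subset st'.2, f st.1 <= f st'.1 & f st.2 <= f st'.2].
Proof.
elim=> [st0|[X0 Y0] e s0 [X1 Y1] st2 step _ [sX sY fX fY]]; first by rewrite !subxx !lexx.
have [sX1 sY1 fX1 fY1] := LA_step_grows step.
by split; [apply: subset_trans sX|apply: subset_trans sY|apply: le_trans fX|
  apply: le_trans fY].
Qed.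

Lemma LA_step_shape st e st' : LA_step f c B st e st' ->
  [\/ st' = st, st' = (e |: st.1, st.2) | st' = (st.1, e |: st.2)].
Proof.
by case: st => X0 Y0; case=> [[_ _ ->]|[[_ _ ->]|[_ _ ->]]];
  [apply: Or31|apply: Or32|apply: Or33].
Qed.

Lemma LA_loop_disjoint st s st' : LA_loop f c B st s st' -> uniq s ->
  [disjoint st.1 & st.2] -> [disjoint st.1 :|: st.2 & s] -> [disjoint st'.1 & st'.2].
Proof.
elim=> [//|[X0 Y0] e s0 st1 st2 step _ IH] /= /andP[es0 s0_uniq] disXY0 fresh.
have eXY0 : e \notin X0 :|: Y0 by rewrite (disjointFl fresh) // inE eqxx.
have fresh0 : [disjoint X0 :|: Y0 & s0].
  by apply: disjointWr fresh; apply/subsetP => x; rewrite inE => ->; rewrite orbT.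
move: eXY0; rewrite inE negb_or => /andP[eX0 eY0].
apply: IH => //; case: (LA_step_shape step) => -> //=.
- by rewrite disjoint_setU1 eY0.
- by rewrite disjoint_setU1r eX0.
- by rewrite -setUA disjoint_setU1 es0.
- by rewrite setUCA disjoint_setU1 es0.
Qed.

(* Either X was not eligible for e, or e went to Y with a gain at least its
   gain on X0, which by submodularity dominates its gain on X. *)
Lemma LA_step_charge X0 Y0 e X1 Y1 (X : {set V}) : LA_step f c B (X0, Y0) e (X1, Y1) ->
  X1 \subset X -> f X1 <= f X -> e \notin X ->
  B * marg f e X <= c e * f X + B * (f Y1 - f Y0).
Proof.
move=> step sX1X fX1X eX; have [sX0X1 _ fX0X1 _] := LA_step_grows step.
have shrink : marg f e X <= marg f e X0 by exact: f_sub (subset_trans sX0X1 sX1X) eX.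
have Bshrink := ler_wpM2l (ltW B_gt0) shrink.
have fX_ge0 := mulr_ge0 (ltW (c_gt0 e)) (f_ge0 X).
have rejected : ~~ eligible f c B e X0 -> B * marg f e X <= c e * f X.
  rewrite eligibleE -ltNge => below.
  by have := ler_wpM2l (ltW (c_gt0 e)) (le_trans fX0X1 fX1X); lra.
move: sX1X; case: step => [[notX _ [_ ->]]|[[_ _ [-> _]]|[eligY better [-> ->]]]] sX1X.
- by rewrite subrr mulr0 addr0; exact: rejected notX.
- by move/subsetP: sX1X => /(_ e (setU11 e X0)); rewrite (negbTE eX).
have gainY := mulr_ge0 (ltW B_gt0) (eligible_marg_ge0 eligY).
case: (boolP (eligible f c B e X0)) => [eligX|/rejected]; last by rewrite /marg in gainY; lra.
have := better eligX; rewrite ler_pM2r ?invr_gt0 // => /(ler_wpM2l (ltW B_gt0)).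
by rewrite /marg in gainY Bshrink *; lra.
Qed.

Lemma LA_loop_charge (O : {set V}) st s st' : LA_loop f c B st s st' ->
  B * (\sum_(o <- s | o \in O :\: st'.1) marg f o st'.1) <=
  (\sum_(o <- s | o \in O) c o) * f st'.1 + B * (f st'.2 - f st.2).
Proof.
elim=> [st0|[X0 Y0] e s0 [X1 Y1] [X Y] step run IH] /=.
  by rewrite !big_nil subrr mulr0 mul0r addr0.
have [sX1X _ fX1X _] := LA_loop_grows run; have [_ _ _ fY0Y1] := LA_step_grows step.
have gainY := ler_wpM2l (ltW B_gt0) fY0Y1.
have fX_ge0 := mulr_ge0 (ltW (c_gt0 e)) (f_ge0 X).
move: IH; rewrite /= !big_cons !inE.
have [eO|eO] := boolP (e \in O); last by rewrite andbF /=; lra.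
have [eX|eX] := boolP (e \in X); first by rewrite /=; lra.
by have := LA_step_charge step sX1X fX1X eX; rewrite /=; lra.
Qed.

Lemma LA_loop_side_bound (O : {set V}) s X0 Y0 X Y :
  LA_loop f c B (X0, Y0) s (X, Y) -> uniq s -> {subset O <= s} -> cost c O <= B ->
  f (O :|: X) <= 2 * f X + f Y.
Proof.
move=> run s_uniq sOs costO.
have sOXs : {subset O :\: X <= s} by move=> x; rewrite inE => /andP[_ /sOs].
have := LA_loop_charge O run; rewrite /= !(big_seq_in _ s_uniq) // => charge.
have := submod_setU_le_sum f_sub X (O :\: X); rewrite setU_setD setUC => union.
have unionB := ler_wpM2l (ltW B_gt0) union.
have costX := ler_wpM2r (f_ge0 X) costO; rewrite /cost in costX.
have Y0_ge0 := mulr_ge0 (ltW B_gt0) (f_ge0 Y0).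
by rewrite -(ler_pM2l B_gt0); lra.
Qed.

End Loop.

Theorem lemma2 (R : realFieldType) (V : finType)
  (f : {set V} -> R) (c : V -> R) (B : R)
  (f_ge0 : forall S : {set V}, 0 <= f S)
  (f0 : f set0 = 0)
  (f_sub : submodular f)
  (c_gt0 : forall e : V, 0 < c e)
  (B_gt0 : 0 < B)
  (c_leB : forall e : V, c e <= B)
  (ord : seq V) (ord_uniq : uniq ord) (ord_V1 : ord =i V1 c B)
  (X Y : {set V}) (run : LA_loop f c B (set0, set0) ord (X, Y))
  (O1 : {set V}) (O1_V1 : O1 \subset V1 c B) (O1_cost : cost c O1 <= B)
  (O1_opt : forall S : {set V}, S \subset V1 c B -> cost c S <= B -> f S <= f O1) :
  f O1 <= 3 * (f X + f Y).
Proof.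
have O1_ord : {subset O1 <= ord} by move=> x /(subsetP O1_V1); rewrite ord_V1.
have disXY : [disjoint X & Y].
  by apply: (LA_loop_disjoint run ord_uniq); apply/pred0P => x; rewrite /= !inE.
have boundX := LA_loop_side_bound f_ge0 f_sub c_gt0 B_gt0 run ord_uniq O1_ord O1_cost.
have boundY := LA_loop_side_bound f_ge0 f_sub c_gt0 B_gt0 (LA_loop_swap run)
  ord_uniq O1_ord O1_cost.
by have := submod_le_setU_pair f_sub f_ge0 O1 disXY; lra.
Qed.
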